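(* Let $(A,\mathit{Con},\Delta)$ be a normal default structure (with trivial entailment) and let $\mid\!\sim_A$ be its skeptical nonmonotonic consequence relation. Then $\mid\!\sim_A$ satisfies cautious cut: for all finite sets $X,T,Y\in\mathit{Con}$ with $X\cup T\in\mathit{Con}$, if $X\mid\!\sim_A T$ and $X\cup T\mid\!\sim_A Y$, then $X\mid\!\sim_A Y$.
   Context: A normal default structure (with trivial entailment) is a triple $(A,\mathit{Con},\Delta)$ where $A$ is a set of tokens; $\mathit{Con}$ is a set of finite subsets of $A$ such that $\emptyset\in\mathit{Con}$, $X\subseteq Y\in\mathit{Con}$ implies $X\in\mathit{Con}$, and $\{a\}\in\mathit{Con}$ for every $a\in A$; an arbitrary subset of $A$ is called consistent (written $X\in\mathit{Con}$) if all its finite subsets lie in $\mathit{Con}$; and $\Delta$ is a set of normal defaults, each written $\frac{X:a}{a}$ with $X\in\mathit{Con}$ finite and $a\in A$. For a consistent set $x\subseteq A$ and any $S\subseteq A$, define $\phi(x,S,0)=x$ and $\phi(x,S,i+1)=\phi(x,S,i)\cup\{a\mid \frac{X:a}{a}\in\Delta,\ X\subseteq\phi(x,S,i),\ \{a\}\cup S\in\mathit{Con}\}$, and $\Phi(x,S)=\bigcup_{i\ge0}\phi(x,S,i)$. A set $y$ is an extension of $x$ if $\Phi(x,y)=y$. The skeptical consequence relation is defined for $X\in\mathit{Con}$ and $a\in A$ by $X\mid\!\sim_A a$ iff $a$ belongs to every extension of $X$; for a finite set $Y$, $X\mid\!\sim_A Y$ means $X\mid\!\sim_A b$ for every $b\in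 Y$. *)

From Stdlib Require Import List.
Import ListNotations.

(* A normal default structure with trivial entailment.
   Tokens: an arbitrary type A.  Finite subsets of A are represented by lists
   (membership via In); arbitrary subsets by predicates A -> Prop. *)

Definition fsubset {A : Type} (X Y : list A) : Prop := forall a, In a X -> In a Y.

Record default_structure (A : Type) := DefaultStructure {
  Con : list A -> Prop;
  Delta : list A -> A -> Prop;                (* Delta X a  <=>  (X:a)/a is a default *)
  Con_nil : Con [];
  Con_down : forall X Y, fsubset X Y -> Con Y -> Con X;
  Con_single : forall a, Con [a];
  Delta_Con : forall X a, Delta X a -> Con X
}.
Arguments Con {A} d X.
Arguments Delta {A} d X a.

Definition ConSet {A : Type} (d : default_structure A) (x : A -> Prop) : Prop :=
  forall X : list A, (forall a, In a X -> x a) -> Con d X.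

Fixpoint phi {A : Type} (d : default_structure A) (x s : A -> Prop) (i : nat)
  : A -> Prop :=
  match i with
  | 0 => x
  | Datatypes.S j => fun a =>
      phi d x s j a \/
      exists X : list A, Delta d X a /\
        (forall b, In b X -> phi d x s j b) /\
        ConSet d (fun c => c = a \/ s c)
  end.

Definition Phi {A : Type} (d : default_structure A) (x s : A -> Prop) : A -> Prop :=
  fun a => exists i, phi d x s i a.

Definition extension {A : Type} (d : default_structure A) (x y : A -> Prop) : Prop :=
  forall a, Phi d x y a <-> y a.

Definition skept {A : Type} (d : default_structure A) (X : list A) (a : A) : Prop :=
  Con d X /\ forall y, extension d (fun b => In b X) y -> y a.

Definition skept_set {A : Type} (d : default_structure A) (X Y : list A) : Prop :=
  forall b, In b Y -> skept d X b.

(* Cautious cut follows from cumulativity of extensions: if y is an extension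
   of x and x ⊆ x' ⊆ y, then y is also an extension of x'.  Indeed Phi(x', y)
   contains Phi(x, y) = y, and conversely y contains x' and is closed under every
   default applicable with justification y, so it contains the least such set
   Phi(x', y).  Given X |~ T, every extension y of X contains X ∪ T, hence is an
   extension of X ∪ T, and so contains Y by X ∪ T |~ Y. *)

From Stdlib Require Import List Lia.

Section Closure.

Variables (A : Type) (d : default_structure A).

Definition default_closed (s z : A -> Prop) : Prop :=
  forall X a, Delta d X a -> (forall b, In b X -> z b) ->
    ConSet d (fun c => c = a \/ s c) -> z a.

Lemma phi_monotone_stage x s i j a : i <= j -> phi d x s i a -> phi d x s j a.
Proof. induction 1; simpl; auto. Qed.

Lemma phi_monotone_base x x' s :
  (forall a, x a -> x' a) -> forall i a, phi d x s i a -> phi d x' s i a.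
Proof.
  intros Hxx' i; induction i as [|i IH]; simpl; intros a Ha; auto.
  destruct Ha as [Ha | [X [HD [HX Hcon]]]]; [left | right]; auto.
  exists X; auto.
Qed.

Lemma Phi_monotone_base x x' s :
  (forall a, x a -> x' a) -> forall a, Phi d x s a -> Phi d x' s a.
Proof. intros Hxx' a [i Hi]; exists i; exact (phi_monotone_base x x' s Hxx' i a Hi). Qed.

Lemma Phi_finite_stage x s (L : list A) :
  (forall b, In b L -> Phi d x s b) -> exists n, forall b, In b L -> phi d x s n b.
Proof.
  induction L as [|c L IH]; intros HL.
  - exists 0; intros b [].
  - destruct (HL c (or_introl eq_refl)) as [i Hi].
    destruct IH as [n Hn]; [intros b Hb; apply HL; right; exact Hb|].
    exists (i + n); intros b [<- | Hb].
    + apply (phi_monotone_stage x s i); [lia | exact Hi].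
    + apply (phi_monotone_stage x s n); [lia | auto].
Qed.

Lemma Phi_default_closed x s : default_closed s (Phi d x s).
Proof.
  intros X a HD HX Hcon.
  destruct (Phi_finite_stage x s X HX) as [n Hn].
  exists (S n); right; exists X; auto.
Qed.

Lemma Phi_least x s z :
  (forall a, x a -> z a) -> default_closed s z -> forall a, Phi d x s a -> z a.
Proof.
  intros Hxz Hz a [i Hi]; revert a Hi.
  induction i as [|i IH]; simpl; intros a Ha; auto.
  destruct Ha as [Ha | [X [HD [HX Hcon]]]]; eauto.
Qed.

Lemma extension_cumulative x x' y :
  extension d x y -> (forall a, x a -> x' a) -> (forall a, x' a -> y a) ->
  extension d x' y.
Proof.
  intros Hy Hxx' Hx'y a; split.
  - apply Phi_least; auto.
    intros X b HD HX Hcon; apply Hy.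
    apply Phi_default_closed with X; auto.
    intros c Hc; apply Hy; auto.
  - intro Ha; apply (Phi_monotone_base x); auto.
    apply Hy; exact Ha.
Qed.

End Closure.

Theorem theorem3 (A : Type) (d : default_structure A) (X T Y : list A) :
  Con d X -> Con d T -> Con d Y -> Con d (X ++ T) ->
  skept_set d X T -> skept_set d (X ++ T) Y -> skept_set d X Y.
Proof.
  intros HX _ _ _ HX_T HXT_Y b Hb.
  split; [exact HX|].
  intros y Hy.
  apply (proj2 (HXT_Y b Hb)).
  apply (extension_cumulative A d (fun c => In c X)); auto.
  - intros a Ha; apply in_or_app; left; exact Ha.
  - intros a Ha; apply in_app_or in Ha as [Ha | Ha].
    + apply Hy; exists 0; exact Ha.
    + exact (proj2 (HX_T a Ha) y Hy).
Qed.
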